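(* The full subcategory $\overline{\square}_\vee$ of $\mathbf{SLat}$ is closed under retracts in $\mathbf{SLat}$: if $B \in \mathbf{SLat}$ is a retract (in $\mathbf{SLat}$) of some $A \in \overline{\square}_\vee$, then $B \in \overline{\square}_\vee$.
   Context: $\mathbf{SLat}$ is the category of (join-)semilattices—sets with an associative, commutative, idempotent binary operation $\vee$—and homomorphisms preserving $\vee$ (not necessarily preserving any bounds or meets). Each semilattice is a poset via $x\le y\iff x\vee y=y$. $\overline{\square}_\vee$ is the full subcategory of $\mathbf{SLat}$ on the finite inhabited semilattices whose induced poset is a distributive lattice. *)

From Stdlib Require Import List.

Definition is_semilattice {T : Type} (j : T -> T -> T) : Prop :=
  (forall x y z, j x (j y z) = j (j x y) z) /\
  (forall x y, j x y = j y x) /\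
  (forall x, j x x = x).

(* Morphisms of SLat: maps preserving the join (no bounds required). *)
Definition is_slat_hom {S T : Type} (jS : S -> S -> S) (jT : T -> T -> T)
  (f : S -> T) : Prop :=
  forall x y, f (jS x y) = jT (f x) (f y).

Definition sle {T : Type} (j : T -> T -> T) (x y : T) : Prop := j x y = y.

Definition is_glb {T : Type} (j : T -> T -> T) (m x y : T) : Prop :=
  sle j m x /\ sle j m y /\
  (forall z, sle j z x -> sle j z y -> sle j z m).

(* The induced poset is a lattice (joins are given by j; meets exist)
   and it is distributive: x /\ (y \/ z) = (x /\ y) \/ (x /\ z). *)
Definition is_distr_lattice {T : Type} (j : T -> T -> T) : Prop :=
  (forall x y, exists m, is_glb j m x y) /\
  (forall x y z mxy mxz m,
      is_glb j mxy x y -> is_glb j mxz x z -> is_glb j m x (j y z) ->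
      m = j mxy mxz).

Definition finite_type (T : Type) : Prop :=
  exists l : list T, forall x, In x l.

Definition in_box_vee (T : Type) (j : T -> T -> T) : Prop :=
  is_semilattice j /\ finite_type T /\ inhabited T /\ is_distr_lattice j.

(* Let [r : A -> B] be a retraction of [s : B -> A] in SLat.  Both maps preserve
   joins, hence are monotone, and [r (s b) = b]; it follows that [r] sends a meet
   of [s x] and [s y] in A to a meet of [x] and [y] in B.  So meets in B are
   computed as [r (s x /\ s y)], and the distributive law of A is carried over to
   B by [r], since [s] and [r] preserve joins.  Finiteness and inhabitedness pass
   to B because [r] is surjective. *)
From Stdlib Require Import List.

Lemma is_glb_unique {T : Type} (j : T -> T -> T) (m1 m2 x y : T) :
  (forall u v, j u v = j v u) -> is_glb j m1 x y -> is_glb j m2 x y -> m1 = m2.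
Proof.
  intros Comm [m1x [m1y m1_greatest]] [m2x [m2y m2_greatest]].
  pose proof (m1_greatest m2 m2x m2y) as m2_le_m1.
  pose proof (m2_greatest m1 m1x m1y) as m1_le_m2.
  unfold sle in *. rewrite <- m2_le_m1, Comm. exact m1_le_m2.
Qed.

Lemma sle_hom {S T : Type} (jS : S -> S -> S) (jT : T -> T -> T) (f : S -> T)
  (a b : S) :
  is_slat_hom jS jT f -> sle jS a b -> sle jT (f a) (f b).
Proof. unfold sle; intros Hf Hab. now rewrite <- Hf, Hab. Qed.

Lemma finite_type_surj {S T : Type} (f : S -> T) :
  (forall t, exists x, f x = t) -> finite_type S -> finite_type T.
Proof.
  intros f_surj [l Hl]. exists (map f l). intro t.
  destruct (f_surj t) as [x <-]. apply in_map, Hl.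
Qed.

Section Retract.

Variables (A B : Type) (jA : A -> A -> A) (jB : B -> B -> B).
Variables (s : B -> A) (r : A -> B).
Hypothesis s_hom : is_slat_hom jB jA s.
Hypothesis r_hom : is_slat_hom jA jB r.
Hypothesis rK : forall b, r (s b) = b.

Lemma retract_glb (x y : B) (m : A) :
  is_glb jA m (s x) (s y) -> is_glb jB (r m) x y.
Proof.
  intros [mx [my m_greatest]]. split; [|split].
  - rewrite <- (rK x). now apply (sle_hom jA jB r).
  - rewrite <- (rK y). now apply (sle_hom jA jB r).
  - intros z zx zy. rewrite <- (rK z). apply (sle_hom jA jB r); [exact r_hom|].
    apply m_greatest; now apply (sle_hom jB jA s).
Qed.

Lemma retract_distr_lattice :
  (forall u v : B, jB u v = jB v u) -> is_distr_lattice jA -> is_distr_lattice jB.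
Proof.
  intros CommB [meetA distrA]. split.
  - intros x y. destruct (meetA (s x) (s y)) as [m Hm].
    exists (r m). now apply retract_glb.
  - intros x y z mxy mxz m Hxy Hxz Hm.
    destruct (meetA (s x) (s y)) as [a1 Ha1].
    destruct (meetA (s x) (s z)) as [a2 Ha2].
    destruct (meetA (s x) (jA (s y) (s z))) as [a3 Ha3].
    assert (Ha3' : is_glb jA a3 (s x) (s (jB y z))) by now rewrite s_hom.
    rewrite (is_glb_unique jB mxy (r a1) x y CommB Hxy (retract_glb _ _ _ Ha1)).
    rewrite (is_glb_unique jB mxz (r a2) x z CommB Hxz (retract_glb _ _ _ Ha2)).
    rewrite (is_glb_unique jB m (r a3) x (jB y z) CommB Hm (retract_glb _ _ _ Ha3')).
    rewrite (distrA _ _ _ _ _ _ Ha1 Ha2 Ha3). apply r_hom.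
Qed.

End Retract.

Theorem mainTheorem5 (A B : Type) (jA : A -> A -> A) (jB : B -> B -> B)
  (s : B -> A) (r : A -> B) :
  in_box_vee A jA ->
  is_semilattice jB ->
  is_slat_hom jB jA s ->
  is_slat_hom jA jB r ->
  (forall b, r (s b) = b) ->
  in_box_vee B jB.
Proof.
  intros [_ [finA [[a0] distrA]]] slatB s_hom r_hom rK.
  pose proof slatB as [_ [commB _]].
  split; [exact slatB|]. split; [|split].
  - apply (finite_type_surj r); [|exact finA].
    intro b. now exists (s b).
  - exact (inhabits (r a0)).
  - exact (retract_distr_lattice A B jA jB s r s_hom r_hom rK commB distrA).
Qed.
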